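(* Let $G = N \rtimes H$ with $N,H$ finite abelian. For each $H$-orbit $\mathcal{O}_\alpha = \{v_1,\dots,v_{c_\alpha}\}$ in $P_N$ with stabilizer $H_\alpha$ and idempotent eigenbasis $\{u^{[\alpha]}_1,\dots,u^{[\alpha]}_{|H_\alpha|}\}$ of $\mathbb{C}[H_\alpha]$, let $J^{[\alpha]}_p = \sum_{i=1}^{c_\alpha} v_iu^{[\alpha]}_p$. Then the set $\{J^{[\alpha]}_p : \alpha \text{ an orbit}, 1\le p\le |H_\alpha|\}$ is exactly the set of primitive central idempotents of $\mathbb{C}[G]$.
   Context: $N$ is normal in $G$, $H$ acts on $N$ by conjugation. For a finite abelian group $K$, the idempotent eigenbasis of $\mathbb{C}[K]$ is the unique basis of $\mathbb{C}[K]$ consisting of simultaneous eigenvectors of left multiplication by elements of $\mathbb{C}[K]$ and consisting of pairwise orthogonal idempotents. $P_N$ is the idempotent eigenbasis of $\mathbb{C}[N]$; conjugation by $H$ permutes $P_N$; $H_\alpha$ is the common stabilizer in $H$ of the elements of $\mathcal{O}_\alpha$. A primitive central idempotent of an algebra $A$ is a nonzero central idempotent $J$ that cannot be written as $J=I_1+I_2$ with $I_1,I_2$ nonzero central idempotents satisfying $I_1I_2=I_2I_1=0$. *)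

(* The complex group algebra C[K] of a subgroup K of a finite
   group gT is modelled inside the ambient algebra of all functions
   gT -> algC (algebraic complex numbers) with convolution product; C[K] is
   the subalgebra of functions supported on K. *)
From HB Require Import structures.
From mathcomp Require Import all_boot all_order all_algebra all_fingroup all_solvable all_field.
Set Implicit Arguments. Unset Strict Implicit. Unset Printing Implicit Defensive.
Import GRing.Theory Num.Theory.
Local Open Scope ring_scope.

Section GroupAlgebra.
Variable gT : finGroupType.

(* elements sum_x f(x) x of the group algebra *)
Definition ga := {ffun gT -> algC}.

Definition gmul (f g : ga) : ga :=
  [ffun x => \sum_(y : gT) f y * g (y^-1 * x)%g].

Definition in_ga (K : {set gT}) (f : ga) : Prop :=
  forall x, x \notin K -> f x = 0.

(* conjugation h f h^-1 of f by h : coefficient at x is f(h^-1 x h) *)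
Definition gconj (f : ga) (h : gT) : ga := [ffun x => f (x ^ h)%g].

Definition is_idem_eigenbasis (K : {set gT}) (B : seq ga) : Prop :=
  [/\ (forall b, b \in B -> in_ga K b),
      (forall c : nat -> algC,
          (forall x, \sum_(i < size B) c i * (nth 0 B i) x = 0) ->
          forall i, (i < size B)%N -> c i = 0),
      (forall f, in_ga K f -> exists c : nat -> algC,
          forall x, f x = \sum_(i < size B) c i * (nth 0 B i) x),
      (forall a b, in_ga K a -> b \in B ->
          exists lam : algC, forall x, gmul a b x = lam * b x) &
      (forall i j, (i < size B)%N -> (j < size B)%N ->
          gmul (nth 0 B i) (nth 0 B j) = if i == j then nth 0 B i else 0)].

Definition hconj_orbit (H : {set gT}) (v : ga) : seq ga :=
  undup [seq gconj v h | h <- enum H].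

Definition orbit_stab (H : {set gT}) (v : ga) : {set gT} :=
  [set h in H | all (fun w => gconj w h == w) (hconj_orbit H v)].

Definition central_idem (G : {set gT}) (J : ga) : Prop :=
  [/\ in_ga G J, (forall a, in_ga G a -> gmul a J = gmul J a) & gmul J J = J].

Definition primitive_central_idem (G : {set gT}) (J : ga) : Prop :=
  [/\ J != 0, central_idem G J &
      ~ (exists I1 I2 : ga, [/\ I1 != 0, I2 != 0, central_idem G I1,
            central_idem G I2 & [/\ J = I1 + I2, gmul I1 I2 = 0 & gmul I2 I1 = 0]])].

End GroupAlgebra.

From HB Require Import structures.
From mathcomp Require Import all_boot all_order all_algebra all_fingroup all_solvable all_field.
Import GRing.Theory Num.Theory.
Local Open Scope ring_scope.

Set Implicit Arguments. Unset Strict Implicit. Unset Printing Implicit Defensive.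

(* Let v range over the idempotent eigenbasis P_N of C[N], O the H-orbit of v,
   S the common stabilizer of O in H, u an idempotent of the eigenbasis of
   C[S], and J = sum_(w in O) w u.

   1. Each v in P_N is, up to the factor v(1) != 0, a linear character of N.
      Its H-conjugates are again eigen-idempotents of the commutative algebra
      C[N], hence the elements of O are pairwise orthogonal idempotents.
   2. Consequently J is a nonzero idempotent of C[G]; it is invariant under
      conjugation by H (which permutes O and fixes u) and by N (a character
      computation, using that u is supported on S), hence central.
   3. Key lemma: for z central in C[G], z v = v f for some f in C[S]; by
      conjugation z w = w f for all w in O, so z J = mu J where f u = mu u.
   4. A nonzero central idempotent on which every central element acts by a
      scalar is primitive; conversely a primitive central idempotent E is the
      sum of the pieces E v u, one of which is nonzero, and then E J = J
      forces E = J. *)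

Section ConvolutionAlgebra.
Variable gT : finGroupType.
Implicit Types (f g h z : ga gT) (c d : algC).

Definition delta (a : gT) : ga gT := [ffun x => (x == a)%:R].

Definition gscale c f : ga gT := [ffun x => c * f x].

Lemma gscaleE c f x : gscale c f x = c * f x.
Proof. by rewrite ffunE. Qed.

Lemma gscale1 f : gscale 1 f = f.
Proof. by apply/ffunP => x; rewrite gscaleE mul1r. Qed.

Lemma gscale0 f : gscale 0 f = 0.
Proof. by apply/ffunP => x; rewrite gscaleE mul0r ffunE. Qed.

Lemma gscaler0 c : gscale c 0 = 0.
Proof. by apply/ffunP => x; rewrite gscaleE ffunE mulr0. Qed.

Lemma gscaleA c d f : gscale c (gscale d f) = gscale (c * d) f.
Proof. by apply/ffunP => x; rewrite !gscaleE mulrA. Qed.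

Lemma gscale_sumr (I : Type) (r : seq I) c (F : I -> ga gT) :
  gscale c (\sum_(i <- r) F i) = \sum_(i <- r) gscale c (F i).
Proof.
apply/ffunP => x; rewrite gscaleE !sum_ffunE mulr_sumr.
by apply: eq_bigr => i _; rewrite gscaleE.
Qed.

Lemma ga_neq0P f : reflect (exists x, f x != 0) (f != 0).
Proof.
apply: (iffP idP) => [fnz|[x]]; last by apply: contraNneq => ->; rewrite ffunE.
apply/existsP; apply: contraR fnz => /existsPn f0.
by apply/eqP/ffunP => x; have := f0 x; rewrite negbK ffunE => /eqP.
Qed.

Lemma gscale_inj c d f : f != 0 -> gscale c f = gscale d f -> c = d.
Proof.
case/ga_neq0P => x fx /(congr1 (fun g : ga gT => g x)).
by rewrite !gscaleE => /(mulIf fx).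
Qed.

Lemma gmulE f g x : gmul f g x = \sum_y f y * g (y^-1 * x)%g.
Proof. by rewrite ffunE. Qed.

Lemma gmulEr f g x : gmul f g x = \sum_y f (x * y^-1)%g * g y.
Proof.
have inj : injective (fun y => (x * y^-1)%g) by move=> a b /mulgI /invg_inj.
rewrite gmulE (reindex_inj inj).
by apply: eq_bigr => y _; rewrite invMg invgK mulgKV.
Qed.

Lemma gmulA f g h : gmul (gmul f g) h = gmul f (gmul g h).
Proof.
apply/ffunP => x; rewrite gmulE.
under eq_bigr do rewrite gmulE mulr_suml.
rewrite exchange_big /= gmulE; apply: eq_bigr => z _.
rewrite gmulE mulr_sumr (reindex_inj (mulgI z)) /=.
by apply: eq_bigr => w _; rewrite mulKg invMg mulgA mulrA.
Qed.

Lemma gmulDl f g h : gmul (f + g) h = gmul f h + gmul g h.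
Proof.
apply/ffunP => x; rewrite !ffunE -big_split.
by apply: eq_bigr => y _; rewrite ffunE mulrDl.
Qed.

Lemma gmulDr f g h : gmul f (g + h) = gmul f g + gmul f h.
Proof.
apply/ffunP => x; rewrite !ffunE -big_split.
by apply: eq_bigr => y _; rewrite ffunE mulrDr.
Qed.

Lemma gmulNl f g : gmul (- f) g = - gmul f g.
Proof.
apply/ffunP => x; rewrite !ffunE -sumrN.
by apply: eq_bigr => y _; rewrite ffunE mulNr.
Qed.

Lemma gmulNr f g : gmul f (- g) = - gmul f g.
Proof.
apply/ffunP => x; rewrite !ffunE -sumrN.
by apply: eq_bigr => y _; rewrite ffunE mulrN.
Qed.

Lemma gmulBl f g h : gmul (f - g) h = gmul f h - gmul g h.
Proof. by rewrite gmulDl gmulNl. Qed.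

Lemma gmulBr f g h : gmul f (g - h) = gmul f g - gmul f h.
Proof. by rewrite gmulDr gmulNr. Qed.

Lemma gmulZl c f g : gmul (gscale c f) g = gscale c (gmul f g).
Proof.
apply/ffunP => x; rewrite !ffunE mulr_sumr.
by apply: eq_bigr => y _; rewrite ffunE mulrA.
Qed.

Lemma gmulZr c f g : gmul f (gscale c g) = gscale c (gmul f g).
Proof.
apply/ffunP => x; rewrite !ffunE mulr_sumr.
by apply: eq_bigr => y _; rewrite ffunE mulrCA.
Qed.

Lemma gmul0l f : gmul 0 f = 0.
Proof. by apply/ffunP => x; rewrite !ffunE big1 // => y _; rewrite ffunE mul0r. Qed.

Lemma gmul0r f : gmul f 0 = 0.
Proof. by apply/ffunP => x; rewrite !ffunE big1 // => y _; rewrite ffunE mulr0. Qed.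

Lemma gmul_suml (I : Type) (r : seq I) (F : I -> ga gT) g :
  gmul (\sum_(i <- r) F i) g = \sum_(i <- r) gmul (F i) g.
Proof.
elim: r => [|i r IH]; first by rewrite !big_nil gmul0l.
by rewrite !big_cons gmulDl IH.
Qed.

Lemma gmul_sumr (I : Type) (r : seq I) (F : I -> ga gT) g :
  gmul g (\sum_(i <- r) F i) = \sum_(i <- r) gmul g (F i).
Proof.
elim: r => [|i r IH]; first by rewrite !big_nil gmul0r.
by rewrite !big_cons gmulDr IH.
Qed.

Lemma gmul_deltaL a f x : gmul (delta a) f x = f (a^-1 * x)%g.
Proof.
rewrite gmulE (bigD1 a) //= big1 ?addr0 => [|y /negbTE ya].
  by rewrite ffunE eqxx mul1r.
by rewrite ffunE ya mul0r.
Qed.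

Lemma gmul_deltaR a f x : gmul f (delta a) x = f (x * a^-1)%g.
Proof.
rewrite gmulEr (bigD1 a) //= big1 ?addr0 => [|y /negbTE ya].
  by rewrite ffunE eqxx mulr1.
by rewrite ffunE ya mulr0.
Qed.

Lemma gmul1l f : gmul (delta 1) f = f.
Proof. by apply/ffunP => x; rewrite gmul_deltaL invg1 mul1g. Qed.

Lemma gmul1r f : gmul f (delta 1) = f.
Proof. by apply/ffunP => x; rewrite gmul_deltaR invg1 mulg1. Qed.

Lemma gconjE f k x : gconj f k x = f (x ^ k)%g.
Proof. by rewrite ffunE. Qed.

Lemma gconjM f g k : gconj (gmul f g) k = gmul (gconj f k) (gconj g k).
Proof.
apply/ffunP => x; rewrite !ffunE (reindex_inj (@conjg_inj _ k)) /=.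
by apply: eq_bigr => y _; rewrite !ffunE -conjVg -conjMg.
Qed.

Lemma gconjZ c f k : gconj (gscale c f) k = gscale c (gconj f k).
Proof. by apply/ffunP => x; rewrite !ffunE. Qed.

Lemma gconj0 (k : gT) : gconj 0 k = 0.
Proof. by apply/ffunP => x; rewrite !ffunE. Qed.

Lemma gconj_sum (I : Type) (r : seq I) (F : I -> ga gT) k :
  gconj (\sum_(i <- r) F i) k = \sum_(i <- r) gconj (F i) k.
Proof.
apply/ffunP => x; rewrite gconjE !sum_ffunE.
by apply: eq_bigr => i _; rewrite gconjE.
Qed.

Lemma gconjJ f a b : gconj (gconj f a) b = gconj f (b * a)%g.
Proof. by apply/ffunP => x; rewrite !ffunE conjgM. Qed.

Lemma gconj1 f : gconj f 1 = f.
Proof. by apply/ffunP => x; rewrite !ffunE conjg1. Qed.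

Lemma gconjK f k : gconj (gconj f k) k^-1 = f.
Proof. by rewrite gconjJ mulVg gconj1. Qed.

Lemma gconj_inj (k : gT) : injective (fun f : ga gT => gconj f k).
Proof. by move=> f g /(congr1 (fun f => gconj f k^-1)); rewrite /= !gconjK. Qed.

Lemma delta_in (K : {set gT}) a : a \in K -> in_ga K (delta a).
Proof. by move=> aK x xK; rewrite ffunE; case: eqP xK => // ->; rewrite aK. Qed.

Lemma in_ga_sub (K L : {set gT}) f : K \subset L -> in_ga K f -> in_ga L f.
Proof. by move=> sKL fK x xL; apply: fK; apply: contra xL; apply: (subsetP sKL). Qed.

Lemma in_ga_mul (K : {group gT}) f g : in_ga K f -> in_ga K g -> in_ga K (gmul f g).
Proof.
move=> fK gK x xK; rewrite gmulE big1 // => y _.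
have [yK|yK] := boolP (y \in K); last by rewrite fK ?mul0r.
by rewrite gK ?mulr0 // groupMl ?groupV.
Qed.

Lemma in_ga_sum (K : {set gT}) (I : eqType) (r : seq I) (F : I -> ga gT) :
  (forall i, i \in r -> in_ga K (F i)) -> in_ga K (\sum_(i <- r) F i).
Proof. by move=> HF x xK; rewrite sum_ffunE big_seq big1 // => i ir; apply: HF. Qed.

Lemma central_of_class_fun (G : {group gT}) z :
  (forall g x : gT, g \in G -> z (x ^ g)%g = z x) ->
  forall a, in_ga G a -> gmul a z = gmul z a.
Proof.
move=> zc a aG; apply/ffunP => x; rewrite gmulE gmulEr; apply: eq_bigr => y _.
have [yG|yG] := boolP (y \in G); last by rewrite aG ?mulr0 ?mul0r.
by rewrite mulrC -(zc y (x * y^-1)%g yG) conjgE mulgKV.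
Qed.

Lemma class_fun_of_central (G : {group gT}) z :
  (forall a, in_ga G a -> gmul a z = gmul z a) ->
  forall g x : gT, g \in G -> z (x ^ g)%g = z x.
Proof.
move=> zc g x gG; have := congr1 (fun f : ga gT => f (x * g)%g) (zc _ (delta_in gG)).
by rewrite gmul_deltaL gmul_deltaR mulgK conjgE mulgA.
Qed.

Lemma gmulC_abelian (K : {group gT}) f g : abelian K ->
  in_ga K f -> in_ga K g -> gmul f g = gmul g f.
Proof.
move=> abK fK gK; apply/ffunP => x; rewrite gmulE gmulEr; apply: eq_bigr => y _.
have [yK|yK] := boolP (y \in K); last by rewrite fK ?mulr0 ?mul0r.
rewrite mulrC; congr (_ * _).
have [xK|xK] := boolP (x \in K); first by rewrite (centsP abK _ (groupVr yK) x xK).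
by rewrite !gK // ?(groupMl _ (groupVr yK)) ?(groupMr _ (groupVr yK)).
Qed.

End ConvolutionAlgebra.

Section IdempotentEigenbasis.
Variables (gT : finGroupType) (K : {set gT}) (B : seq (ga gT)).
Hypothesis eigB : is_idem_eigenbasis K B.

Lemma eigenbasis_in b : b \in B -> in_ga K b.
Proof. by case: eigB => inB _ _ _ _; apply: inB. Qed.

Lemma eigenbasis_eigen a b : in_ga K a -> b \in B -> exists lam, gmul a b = gscale lam b.
Proof.
case: eigB => _ _ _ eig _ aK bB; have [lam Hl] := eig a b aK bB.
by exists lam; apply/ffunP => x; rewrite Hl gscaleE.
Qed.

Lemma eigenbasis_idem b : b \in B -> gmul b b = b.
Proof.
by case: eigB => _ _ _ _ orth bB; rewrite -(nth_index 0 bB) orth ?index_mem // eqxx.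
Qed.

(* linear independence excludes the zero vector *)
Lemma eigenbasis_nth_neq0 i : (i < size B)%N -> nth 0 B i != 0.
Proof.
move=> iB; apply/eqP => b0; case: eigB => _ indep _ _ _.
suff /eqP : (i == i)%:R = 0 :> algC by rewrite eqxx oner_eq0.
apply: (indep (fun k => (k == i)%:R)) iB => x; apply: big1 => k _; case: eqP => [->|_]; last by rewrite mul0r.
by rewrite b0 ffunE mulr0.
Qed.

Lemma eigenbasis_neq0 b : b \in B -> b != 0.
Proof. by move=> bB; rewrite -(nth_index 0 bB) eigenbasis_nth_neq0 ?index_mem. Qed.

(* the eigen-idempotents sum to the unit of C[K]: writing delta 1 = sum c_i b_i
   and multiplying by b_j gives c_j b_j = b_j, i.e. c_j = 1 *)
Lemma eigenbasis_sum : (1 \in K)%g -> \sum_(b <- B) b = delta 1%g.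
Proof.
move=> K1; case: eigB => _ _ span _ orth.
have [c Hc] := span _ (delta_in K1).
have D : delta 1%g = \sum_(i < size B) gscale (c i) (nth 0 B i).
  by apply/ffunP => x; rewrite Hc sum_ffunE; apply: eq_bigr => i _; rewrite gscaleE.
have c1 j : (j < size B)%N -> c j = 1.
  move=> jB; apply: (@gscale_inj _ _ _ (nth 0 B j)); first exact: eigenbasis_nth_neq0.
  rewrite gscale1 -{2}(gmul1l (nth 0 B j)) D gmul_suml (bigD1 (Ordinal jB)) //=.
  rewrite gmulZl orth // eqxx big1 ?addr0 // => i ij.
  by rewrite gmulZl orth // ifN ?gscaler0.
rewrite D (big_nth 0) big_mkord; apply: eq_bigr => i _.
by rewrite c1 ?gscale1.
Qed.

End IdempotentEigenbasis.

Section Idempotents.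
Variable gT : finGroupType.
Implicit Types (p q J : ga gT).

Lemma scalar_idem_01 c J : J != 0 -> gmul J J = J ->
  gmul (gscale c J) (gscale c J) = gscale c J -> c = 0 \/ c = 1.
Proof.
move=> Jnz JJ; rewrite gmulZl gmulZr JJ gscaleA => /(gscale_inj Jnz) cc.
have /eqP : c * (c - 1) = 0 by rewrite mulrBr mulr1 cc subrr.
by rewrite mulf_eq0 subr_eq0 => /orP[]/eqP; [left|right].
Qed.

Lemma eigen_idem_orth p q lam mu : p != 0 -> q != 0 ->
  gmul p p = p -> gmul q q = q -> gmul p q = gmul q p ->
  gmul q p = gscale lam p -> gmul p q = gscale mu q -> p != q -> gmul p q = 0.
Proof.
move=> pnz qnz pp qq pq El Em neq_pq.
have [l0|lnz] := eqVneq lam 0; first by rewrite pq El l0 gscale0.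
have pE : p = gscale (mu / lam) q.
  by rewrite mulrC -gscaleA -Em pq El gscaleA mulVf // gscale1.
have [c0|c1] : mu / lam = 0 \/ mu / lam = 1 by apply: (scalar_idem_01 qnz qq); rewrite -pE.
  by move: pnz; rewrite pE c0 gscale0 eqxx.
by move: neq_pq; rewrite pE c1 gscale1 eqxx.
Qed.

End Idempotents.

Section SemidirectProduct.
Variables (gT : finGroupType) (G N H : {group gT}).
Hypothesis defG : (N ><| H)%g = G.

Lemma sdprod_normal : (N <| G)%g. Proof. by case/sdprod_context: defG. Qed.
Lemma sdprod_subH : H \subset G. Proof. by case/sdprod_context: defG. Qed.
Lemma sdprod_subN : N \subset G. Proof. by case/andP: sdprod_normal. Qed.

Lemma memJN x g : g \in G -> ((x ^ g)%g \in N) = (x \in N).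
Proof. by move=> gG; apply: memJ_norm; case/andP: sdprod_normal => _ /subsetP; apply. Qed.

Lemma sdprod_factor x : x \in G -> exists2 n, n \in N & exists2 h, h \in H & x = (n * h)%g.
Proof.
case/sdprod_context: defG => _ _ <- _ _.
by case/mulsgP => n h nN hH ->; exists n => //; exists h.
Qed.

Lemma sdprod_factor_uniq k h : k \in H -> h \in H -> (k * h^-1)%g \in N -> k = h.
Proof.
move=> kH hH khN; case/sdprod_context: defG => _ _ _ _ tiNH.
have : (k * h^-1)%g \in (N :&: H)%g by rewrite inE khN groupM ?groupV.
by rewrite tiNH inE -eq_mulgV1 => /eqP.
Qed.

End SemidirectProduct.

Section Orbits.
Variables (gT : finGroupType) (H : {group gT}).
Hypothesis abH : abelian H.
Implicit Types (v w : ga gT).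

Lemma orbitP v w :
  reflect (exists2 k, k \in H & w = gconj v k) (w \in hconj_orbit H v).
Proof.
rewrite /hconj_orbit mem_undup; apply: (iffP mapP) => [[k]|[k]].
  by rewrite mem_enum => kH ->; exists k.
by move=> kH ->; exists k; rewrite ?mem_enum.
Qed.

Lemma orbit_uniq v : uniq (hconj_orbit H v).
Proof. exact: undup_uniq. Qed.

Lemma orbit_self v : v \in hconj_orbit H v.
Proof. by apply/orbitP; exists 1%g; rewrite ?group1 ?gconj1. Qed.

Lemma orbit_conj_perm v k : k \in H ->
  perm_eq [seq gconj w k | w <- hconj_orbit H v] (hconj_orbit H v).
Proof.
move=> kH; apply: uniq_perm; last 1 first.
- move=> w; apply/mapP/idP => [[w0 /orbitP[j jH ->] ->]|/orbitP[j jH ->]].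
    by apply/orbitP; exists (k * j)%g; rewrite ?groupM // gconjJ.
  exists (gconj v (k^-1 * j)%g); last by rewrite gconjJ mulKVg.
  by apply/orbitP; exists (k^-1 * j)%g; rewrite ?groupM ?groupV.
- by rewrite map_inj_uniq ?orbit_uniq //; apply: gconj_inj.
- exact: orbit_uniq.
Qed.

Lemma stabP v h :
  reflect (h \in H /\ forall w, w \in hconj_orbit H v -> gconj w h = w)
          (h \in orbit_stab H v).
Proof.
rewrite inE; apply: (iffP andP) => [[hH /allP fixO]|[hH fixO]]; split => //.
  by move=> w /fixO /eqP.
by apply/allP => w /fixO ->.
Qed.

Lemma stab_sub v : orbit_stab H v \subset H.
Proof. by apply/subsetP => h /stabP[]. Qed.

Lemma stab1 v : 1%g \in orbit_stab H v.
Proof. by apply/stabP; split => [|w _]; rewrite ?group1 ?gconj1. Qed.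

Lemma stabV v h w : h \in orbit_stab H v -> w \in hconj_orbit H v -> gconj w h^-1 = w.
Proof. by case/stabP => _ fixO wO; rewrite -{1}(fixO w wO) gconjK. Qed.

(* H being abelian, fixing v already fixes its whole orbit *)
Lemma stab_of_fix v k : k \in H -> gconj v k = v -> k \in orbit_stab H v.
Proof.
move=> kH fixv; apply/stabP; split => // w /orbitP[j jH ->].
by rewrite gconjJ (centsP abH k kH j jH) -gconjJ fixv.
Qed.

Lemma gconj_fix f k : in_ga H f -> k \in H -> gconj f k = f.
Proof.
move=> fH kH; apply/ffunP => x; rewrite gconjE.
have [xH|xH] := boolP (x \in H); last by rewrite !fH // groupJr.
by rewrite conjgE -(centsP abH k kH x xH) mulKg.
Qed.

End Orbits.

Section NormalEigenbasis.
Variables (gT : finGroupType) (G N H : {group gT}) (PN : seq (ga gT)).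
Hypotheses (defG : (N ><| H)%g = G) (abN : abelian N)
  (eigPN : is_idem_eigenbasis N PN).

(* left translation by a in N rescales v, since delta a^-1 is in C[N] *)
Lemma eigen_transl v a : v \in PN -> a \in N ->
  exists lam, forall x, v (a * x)%g = lam * v x.
Proof.
move=> vP aN; have [lam E] := eigenbasis_eigen eigPN (delta_in (groupVr aN)) vP.
exists lam => x; have := congr1 (fun f : ga gT => f x) E.
by rewrite gmul_deltaL gscaleE invgK.
Qed.

Lemma eigen_at1_neq0 v : v \in PN -> v 1%g != 0.
Proof.
move=> vP; apply: contraNneq (eigenbasis_neq0 eigPN vP) => v10; apply/eqP/ffunP => x.
have [xN|xN] := boolP (x \in N); last by rewrite ffunE (eigenbasis_in eigPN vP).
by have [lam E] := eigen_transl vP xN; rewrite ffunE -(mulg1 x) E v10 mulr0.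
Qed.

(* v / v(1) is a linear character of N *)
Lemma eigen_mul v a x : v \in PN -> a \in N -> v (a * x)%g * v 1%g = v a * v x.
Proof.
move=> vP aN; have [lam E] := eigen_transl vP aN.
by rewrite E -(mulg1 a) E mulrAC.
Qed.

Lemma gconj_inN f j : in_ga N f -> j \in G -> in_ga N (gconj f j).
Proof. by move=> fN jG x xN; rewrite gconjE fN // (memJN defG _ jG). Qed.

(* The elements of an H-orbit in P_N share these properties, transported by
   the automorphism gconj _ j. *)
Section OrbitMember.
Variables (v w : ga gT).
Hypotheses (vP : v \in PN) (wO : w \in hconj_orbit H v).

Let conj_of_orbit : exists2 j, j \in G & w = gconj v j.
Proof.
by case/orbitP: wO => j jH ->; exists j => //; apply: (subsetP (sdprod_subH defG)).
Qed.

Lemma member_in : in_ga N w.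
Proof. by case: conj_of_orbit => j jG ->; apply: gconj_inN (eigenbasis_in eigPN vP) jG. Qed.

Lemma member_at1 : w 1%g = v 1%g.
Proof. by case: conj_of_orbit => j _ ->; rewrite gconjE conj1g. Qed.

Lemma member_mul a x : a \in N -> w (a * x)%g * w 1%g = w a * w x.
Proof.
case: conj_of_orbit => j jG -> aN; rewrite !gconjE conj1g conjMg eigen_mul //.
by rewrite (memJN defG _ jG).
Qed.

Lemma member_idem : gmul w w = w.
Proof. by case: conj_of_orbit => j _ ->; rewrite -gconjM (eigenbasis_idem eigPN vP). Qed.

Lemma member_neq0 : w != 0.
Proof.
case: conj_of_orbit => j _ ->; apply: contra (eigenbasis_neq0 eigPN vP) => /eqP w0.
by apply/eqP; apply: (@gconj_inj _ j); rewrite /= w0 gconj0.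
Qed.

Lemma member_eigen a : in_ga N a -> exists lam, gmul a w = gscale lam w.
Proof.
case: conj_of_orbit => j jG -> aN.
have [lam E] := eigenbasis_eigen eigPN (gconj_inN aN (groupVr jG)) vP.
by exists lam; rewrite -[a](gconjK a j^-1) invgK -gconjM E gconjZ.
Qed.

End OrbitMember.

Lemma orbit_orth v w w' : v \in PN -> w \in hconj_orbit H v ->
  w' \in hconj_orbit H v -> w != w' -> gmul w w' = 0.
Proof.
move=> vP wO w'O; have [wN w'N] := (member_in vP wO, member_in vP w'O).
have [lam El] := member_eigen vP wO w'N; have [mu Em] := member_eigen vP w'O wN.
apply: (eigen_idem_orth _ _ _ _ _ El Em); rewrite ?(member_neq0 vP) ?(member_idem vP) //.
exact: gmulC_abelian abN wN w'N.
Qed.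

End NormalEigenbasis.

Definition orbit_idem (gT : finGroupType) (H : {set gT}) (v u : ga gT) : ga gT :=
  \sum_(w <- hconj_orbit H v) gmul w u.

Section OrbitIdempotent.
Variables (gT : finGroupType) (G N H : {group gT}) (PN : seq (ga gT)).
Hypotheses (defG : (N ><| H)%g = G) (abN : abelian N) (abH : abelian H)
  (eigPN : is_idem_eigenbasis N PN).
Variables (v u : ga gT) (BS : seq (ga gT)).
Hypotheses (vP : v \in PN) (eigS : is_idem_eigenbasis (orbit_stab H v) BS)
  (uB : u \in BS).

Let O := hconj_orbit H v.
Let S := orbit_stab H v.
Let J := orbit_idem H v u.
Let uS : in_ga S u := eigenbasis_in eigS uB.
Let uH : in_ga H u := in_ga_sub (stab_sub H v) uS.

Lemma gmul_sdprod_val a b n h : in_ga N a -> in_ga H b -> n \in N -> h \in H ->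
  gmul a b (n * h)%g = a n * b h.
Proof.
move=> aN bH nN hH; rewrite gmulEr (bigD1 h) //= mulgK big1 ?addr0 // => y yh.
have [yH|yH] := boolP (y \in H); last by rewrite bH ?mulr0.
rewrite aN ?mul0r //; apply: contra yh => nhyN.
by apply/eqP/esym/(sdprod_factor_uniq defG hH yH); rewrite -(groupMl _ nN) mulgA.
Qed.

Lemma orbit_idem_val n h : n \in N -> h \in H ->
  J (n * h)%g = (\sum_(w <- O) w n) * u h.
Proof.
move=> nN hH; rewrite sum_ffunE mulr_suml big_seq [RHS]big_seq.
by apply: eq_bigr => w wO; rewrite gmul_sdprod_val //; exact: (member_in defG eigPN vP wO).
Qed.

Lemma orbit_idem_in : in_ga G J.
Proof.
apply: in_ga_sum => w wO; apply: in_ga_mul.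
  exact: in_ga_sub (sdprod_subN defG) (member_in defG eigPN vP wO).
exact: in_ga_sub (sdprod_subH defG) uH.
Qed.

(* C[S] commutes with every member of the orbit, which S fixes *)
Lemma stab_commute a w : in_ga S a -> w \in O -> gmul a w = gmul w a.
Proof.
move=> aS wO; apply/ffunP => x; rewrite gmulE gmulEr; apply: eq_bigr => y _.
have [yS|yS] := boolP (y \in S); last by rewrite aS ?mulr0 ?mul0r.
rewrite mulrC -{1}(stabV yS wO) gconjE conjgE invgK.
by rewrite !mulgA mulgV mul1g.
Qed.

(* J J = sum_(w, w') w u w' u = sum_(w, w') w w' u u = sum_w w u *)
Lemma orbit_idem_idem : gmul J J = J.
Proof.
rewrite /J /orbit_idem gmul_suml big_seq [RHS]big_seq; apply: eq_bigr => w wO.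
rewrite gmul_sumr (bigD1_seq w) ?orbit_uniq //= big_seq_cond.
rewrite big1 ?addr0 => [|w' /andP[w'O w'w]].
  rewrite gmulA -(gmulA u) (stab_commute uS wO) (gmulA w u u).
  by rewrite (eigenbasis_idem eigS uB) -gmulA (member_idem defG eigPN vP wO).
rewrite gmulA -(gmulA u) (stab_commute uS w'O) -!gmulA.
by rewrite (orbit_orth defG abN eigPN vP wO w'O) ?gmul0l // eq_sym.
Qed.

(* conjugation by H permutes the orbit and fixes u *)
Lemma orbit_idem_conjH k x : k \in H -> J (x ^ k)%g = J x.
Proof.
move=> kH; rewrite -gconjE; congr (_ x).
rewrite /J /orbit_idem gconj_sum; under eq_bigr do rewrite gconjM (gconj_fix abH uH kH).
rewrite -(big_map (fun w => gconj w k) xpredT (fun w => gmul w u)).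
by rewrite (perm_big _ (orbit_conj_perm v kH)).
Qed.

(* conjugation by N: with x = m h, h in S (else u h = 0), the value J(x^n) is
   sum_w w(n^-1 m n^h^-1) u h, and each w is a character fixed by h *)
Lemma orbit_idem_conjN n x : n \in N -> J (x ^ n)%g = J x.
Proof.
move=> nN; have nG : n \in G by apply: (subsetP (sdprod_subN defG)).
have [xG|xG] := boolP (x \in G); last by rewrite !orbit_idem_in // groupJr.
have [m mN [h hH ->]] := sdprod_factor defG xG.
set q := (n ^ h^-1)%g.
have qN : q \in N by rewrite /q (memJN defG) // groupV (subsetP (sdprod_subH defG)).
have -> : ((m * h) ^ n)%g = (n^-1 * (m * q) * h)%g.
  by rewrite /q !conjgE invgK !mulgA mulgKV.
have nmqN := groupM (groupVr nN) (groupM mN qN).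
rewrite !orbit_idem_val //.
have [uh0|uhnz] := eqVneq (u h) 0; first by rewrite uh0 !mulr0.
have hS : h \in S by apply: contraR uhnz => hS; rewrite uS.
congr (_ * u h); apply: eq_big_seq => w wO.
have w1nz : w 1%g != 0 by rewrite (member_at1 defG wO) (eigen_at1_neq0 eigPN vP).
have wq : w q = w n by rewrite /q -gconjE (stabV hS wO).
have wM := member_mul defG eigPN vP wO.
have wn := wM _ n (groupVr nN); rewrite mulVg in wn.
apply: (mulIf w1nz); apply: (mulIf w1nz).
rewrite (wM n^-1%g (m * q)%g) ?groupV // -[LHS]mulrA (wM m q) // wq -mulrA wn.
by rewrite mulrCA.
Qed.

Lemma orbit_idem_central a : in_ga G a -> gmul a J = gmul J a.
Proof.
apply: central_of_class_fun => g x gG.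
have [n nN [k kH ->]] := sdprod_factor defG gG.
by rewrite conjgM orbit_idem_conjH // orbit_idem_conjN.
Qed.

(* J(h) = |O| v(1) u(h) for h in H, and u(h) != 0 for some h *)
Lemma orbit_idem_neq0 : J != 0.
Proof.
have /ga_neq0P[h uh] := eigenbasis_neq0 eigS uB.
have hH : h \in H by apply: (subsetP (stab_sub H v)); apply: contraR uh => hS; rewrite uS.
have Onil : size O != 0%N.
  by rewrite size_eq0; apply/eqP => O0; move: (orbit_self H v); rewrite -/O O0.
apply/ga_neq0P; exists (1 * h)%g; rewrite orbit_idem_val // mulf_eq0 negb_or uh andbT.
rewrite (eq_big_seq (fun _ => v 1%g)) => [|w wO]; last exact: (member_at1 defG wO).
by rewrite big_const_seq count_predT iter_addr_0 mulrn_eq0 negb_or Onil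
  (eigen_at1_neq0 eigPN vP).
Qed.

End OrbitIdempotent.

Section CentralAction.
Variables (gT : finGroupType) (G N H : {group gT}) (PN : seq (ga gT)).
Hypotheses (defG : (N ><| H)%g = G) (abN : abelian N) (abH : abelian H)
  (eigPN : is_idem_eigenbasis N PN).
Variables (v z : ga gT).
Hypotheses (vP : v \in PN) (zG : in_ga G z)
  (zc : forall a, in_ga G a -> gmul a z = gmul z a).

Let O := hconj_orbit H v.
Let S := orbit_stab H v.
Let F := gmul z v.
Let vN : in_ga N v := eigenbasis_in eigPN vP.
Let v1nz : v 1%g != 0 := eigen_at1_neq0 eigPN vP.

Lemma eigen_delta a : a \in N -> gmul (delta a^-1) v = gscale (v a / v 1%g) v.
Proof.
move=> aN; apply/ffunP => x; rewrite gmul_deltaL invgK gscaleE.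
by apply: (mulIf v1nz); rewrite (eigen_mul eigPN) // mulrAC divfK.
Qed.

(* F = z v transforms under N on both sides by the same character *)
Lemma central_transl_left a x : a \in N -> F (a * x)%g * v 1%g = v a * F x.
Proof.
move=> aN; have dG : in_ga G (delta a^-1).
  by apply: delta_in; rewrite groupV (subsetP (sdprod_subN defG)).
have := congr1 (fun f : ga gT => f x) (gmulA (delta a^-1) z v).
rewrite (zc dG) gmulA eigen_delta // gmulZr -/F gmul_deltaL gscaleE invgK => <-.
by rewrite mulrAC divfK.
Qed.

Lemma central_transl_right a x : a \in N -> F (x * a)%g * v 1%g = v a * F x.
Proof.
move=> aN; have dN : in_ga N (delta a^-1) by apply: delta_in; rewrite groupV.
have := congr1 (fun f : ga gT => f x) (gmulA z v (delta a^-1)).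
rewrite -(gmulC_abelian abN dN vN) eigen_delta // gmulZr -/F gmul_deltaR gscaleE invgK.
by move=> ->; rewrite mulrAC divfK.
Qed.

(* if F(k) != 0 for k in H, comparing F(k a) with F(a^k^-1 k) shows that k
   fixes v, hence k lies in S *)
Lemma central_vanish_off_stab k : k \in H -> k \notin S -> F k = 0.
Proof.
move=> kH; apply: contraNeq => Fk.
have kG : k \in G by apply: (subsetP (sdprod_subH defG)).
have fixv a : a \in N -> v (a ^ k^-1)%g = v a.
  move=> aN; have aN' : (a ^ k^-1)%g \in N by rewrite (memJN defG) // groupV.
  apply: (mulIf Fk).
  have conj_a : (k * a)%g = (a ^ k^-1 * k)%g by rewrite conjgE invgK -mulgA mulgKV.
  by rewrite -central_transl_left // -conj_a central_transl_right.
have fixv_conj : gconj v k^-1 = v.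
  apply/ffunP => x; rewrite gconjE.
  have [xN|xN] := boolP (x \in N); first by rewrite fixv.
  by rewrite !vN // (memJN defG) // groupV.
by apply: (stab_of_fix abH kH); rewrite -{1}fixv_conj gconjJ mulgV gconj1.
Qed.

(* the C[S]-coefficient f with z v = v f *)
Definition stab_part : ga gT := [ffun x => if x \in S then F x / v 1%g else 0].

Lemma stab_part_in : in_ga S stab_part.
Proof. by move=> x xS; rewrite ffunE (negbTE xS). Qed.

(* z v = v f: both sides vanish off G, and at x = m k (m in N, k in H) the
   right side is v(m) f(k) = v(m) F(k) / v(1) = F(m k) *)
Lemma central_eq_stab_part : gmul v stab_part = F.
Proof.
have sNG := sdprod_subN defG.
have vS y : y \in S -> y \in H by apply: (subsetP (stab_sub H v)).
apply/ffunP => x; rewrite gmulEr.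
have [xG|xG] := boolP (x \in G); last first.
  rewrite (in_ga_mul zG (in_ga_sub sNG vN) xG) big1 // => y _.
  have [yS|yS] := boolP (y \in S); last by rewrite ffunE (negbTE yS) mulr0.
  rewrite vN ?mul0r //; apply: contra xG => xyN.
  have yG : y \in G by apply: (subsetP (sdprod_subH defG)); apply: vS.
  by rewrite -(mulgKV y x) groupM // (subsetP sNG).
have [m mN [k kH ->]] := sdprod_factor defG xG.
rewrite (bigD1 k) //= big1 ?addr0 => [|y yk]; last first.
  have [yS|yS] := boolP (y \in S); last by rewrite ffunE (negbTE yS) mulr0.
  rewrite vN ?mul0r //; apply: contra yk => mkyN.
  by apply/eqP/esym/(sdprod_factor_uniq defG kH (vS y yS)); rewrite -(groupMl _ mN) mulgA.
rewrite mulgK ffunE; case: ifPn => kS; last first.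
  have /eqP := central_transl_left k mN.
  rewrite (central_vanish_off_stab kH kS) !mulr0 mulf_eq0 (negbTE v1nz) orbF.
  by move=> /eqP ->.
by apply: (mulIf v1nz); rewrite central_transl_left // -mulrA divfK.
Qed.

(* z w = w f for every w in the orbit, by conjugating z v = v f: z and f are
   fixed by H *)
Lemma central_acts_on_orbit :
  exists2 f, in_ga S f & forall w, w \in O -> gmul z w = gmul w f.
Proof.
exists stab_part; first exact: stab_part_in.
move=> w /orbitP[j jH ->].
have jG : j \in G by apply: (subsetP (sdprod_subH defG)).
have zj : gconj z j = z.
  by apply/ffunP => x; rewrite gconjE (class_fun_of_central zc x jG).
have fH : in_ga H stab_part by apply: in_ga_sub (stab_sub H v) stab_part_in.
by rewrite -{1}zj -gconjM -/F -central_eq_stab_part gconjM (gconj_fix abH fH jH).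
Qed.

End CentralAction.

Section PrimitiveCentralIdempotents.
Variables (gT : finGroupType) (G : {group gT}).
Implicit Types (E J : ga gT).

(* if every central idempotent acts on J by a scalar, then in J = I1 + I2 each
   Ii = Ii J is a multiple of J, and I1 I2 = 0 forces one of them to vanish *)
Lemma primitive_of_scalar_action J : J != 0 -> central_idem G J ->
  (forall z, central_idem G z -> exists mu, gmul z J = gscale mu J) ->
  primitive_central_idem G J.
Proof.
move=> Jnz [JG Jc JJ] scalar; split=> // -[I1 [I2 [n1 n2 cI1 cI2 [defJ o12 o21]]]].
have [[m1 E1] [m2 E2]] := (scalar I1 cI1, scalar I2 cI2).
have I1E : I1 = gscale m1 J.
  by case: cI1 => _ _ I1I1; rewrite -E1 defJ gmulDr I1I1 o12 addr0.
have I2E : I2 = gscale m2 J.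
  by case: cI2 => _ _ I2I2; rewrite -E2 defJ gmulDr I2I2 o21 add0r.
move: o12; rewrite I1E I2E gmulZl gmulZr JJ gscaleA -(gscale0 J).
move/(gscale_inj Jnz)/eqP; rewrite mulf_eq0 => /orP[]/eqP m0.
  by move: n1; rewrite I1E m0 gscale0 eqxx.
by move: n2; rewrite I2E m0 gscale0 eqxx.
Qed.

(* a primitive central idempotent E absorbing a nonzero central idempotent J
   equals it, since E = J + (E - J) is a decomposition *)
Lemma primitive_absorbs E J : primitive_central_idem G E -> J != 0 ->
  central_idem G J -> gmul E J = J -> E = J.
Proof.
move=> [_ [EG Ec EE] indecE] Jnz [JG Jc JJ] EJ.
have JE : gmul J E = J by rewrite Ec.
have [EJ0|EJnz] := eqVneq (E - J) 0; first by apply/eqP; rewrite -subr_eq0 EJ0.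
case: indecE; exists J, (E - J); split=> //; last first.
- by split; [rewrite addrC subrK | rewrite gmulBr JE JJ subrr | rewrite gmulBl EJ JJ subrr].
split.
- by move=> x xG; rewrite !ffunE EG // JG // subr0.
- by move=> a aG; rewrite gmulBr gmulBl Ec // Jc.
by rewrite gmulBl !gmulBr EE EJ JE JJ subrr subr0.
Qed.

End PrimitiveCentralIdempotents.

(* Since 1 = sum_v v in C[N] and 1 = sum_u u in C[S] for each v, every f
   splits as sum_(v, u) f v u. *)
Section UnitDecomposition.
Variables (gT : finGroupType) (N H : {group gT}) (PN : seq (ga gT))
  (U : ga gT -> seq (ga gT)).
Hypotheses (eigPN : is_idem_eigenbasis N PN)
  (eigU : forall v, v \in PN -> is_idem_eigenbasis (orbit_stab H v) (U v)).

Lemma unit_decomposition f :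
  f = \sum_(v <- PN) \sum_(u <- U v) gmul (gmul f v) u.
Proof.
rewrite -{1}(gmul1r f) -(eigenbasis_sum eigPN (group1 N)) gmul_sumr.
rewrite big_seq [RHS]big_seq; apply: eq_bigr => v vP.
by rewrite -{1}(gmul1r (gmul f v)) -(eigenbasis_sum (eigU vP) (stab1 H v)) gmul_sumr.
Qed.

Lemma nonzero_component f : f != 0 ->
  exists2 v, v \in PN & exists2 u, u \in U v & gmul (gmul f v) u != 0.
Proof.
rewrite {1}(unit_decomposition f) => /eqP fnz.
case: (boolP (has (fun v => has (fun u => gmul (gmul f v) u != 0) (U v)) PN)).
  by case/hasP=> v vP /hasP[u uU nz]; exists v => //; exists u.
move/hasPn=> zero; case: fnz; rewrite big_seq big1 // => v vP.
by rewrite big_seq big1 // => u uU; have /hasPn/(_ u uU)/negPn/eqP := zero v vP.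
Qed.

End UnitDecomposition.

Section Classification.
Variables (gT : finGroupType) (G N H : {group gT}) (PN : seq (ga gT))
  (U : ga gT -> seq (ga gT)).
Hypotheses (defG : (N ><| H)%g = G) (abN : abelian N) (abH : abelian H)
  (eigPN : is_idem_eigenbasis N PN)
  (eigU : forall v, v \in PN -> is_idem_eigenbasis (orbit_stab H v) (U v)).

Lemma orbit_idem_central_idem v u : v \in PN -> u \in U v ->
  central_idem G (orbit_idem H v u).
Proof.
move=> vP uU; split.
- exact: (orbit_idem_in defG eigPN vP (eigU vP) uU).
- exact: (orbit_idem_central defG abH eigPN vP (eigU vP) uU).
exact: (orbit_idem_idem defG abN eigPN vP (eigU vP) uU).
Qed.

(* a central z acts on J = orbit_idem H v u, and on v u, by the eigenvalue mu
   of the coefficient f of central_acts_on_orbit on u *)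
Lemma central_scalar_on_orbit_idem v u z : v \in PN -> u \in U v ->
  in_ga G z -> (forall a, in_ga G a -> gmul a z = gmul z a) ->
  exists mu, gmul z (orbit_idem H v u) = gscale mu (orbit_idem H v u)
          /\ gmul (gmul z v) u = gscale mu (gmul v u).
Proof.
move=> vP uU zG zc.
have [f fS zf] := central_acts_on_orbit defG abN abH eigPN vP zG zc.
have [mu fu] := eigenbasis_eigen (eigU vP) fS uU.
have zwu w : w \in hconj_orbit H v -> gmul z (gmul w u) = gscale mu (gmul w u).
  by move=> wO; rewrite -gmulA zf // gmulA fu gmulZr.
exists mu; split; last by rewrite gmulA zwu // orbit_self.
rewrite /orbit_idem gmul_sumr gscale_sumr big_seq [RHS]big_seq.
by apply: eq_bigr => w wO; rewrite zwu.
Qed.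

Lemma orbit_idem_primitive v u : v \in PN -> u \in U v ->
  primitive_central_idem G (orbit_idem H v u).
Proof.
move=> vP uU; apply: primitive_of_scalar_action.
- exact: (orbit_idem_neq0 defG eigPN vP (eigU vP) uU).
- exact: orbit_idem_central_idem.
move=> z [zG zc _]; have [mu [zJ _]] := central_scalar_on_orbit_idem vP uU zG zc.
by exists mu.
Qed.

(* E has a nonzero component E v u = mu v u; then E J = mu J with mu != 0, and
   E J idempotent gives mu = 1, so E absorbs J *)
Lemma primitive_is_orbit_idem E : primitive_central_idem G E ->
  exists2 v, v \in PN & exists2 u, u \in U v & E = orbit_idem H v u.
Proof.
move=> primE; have [Enz [EG Ec EE] _] := primE.
have [v vP [u uU Evu_nz]] := nonzero_component eigPN eigU Enz.
exists v => //; exists u => //; set J := orbit_idem H v u.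
have [mu [EJ Evu]] := central_scalar_on_orbit_idem vP uU EG Ec.
have mu_nz : mu != 0 by apply: contraNneq Evu_nz => mu0; rewrite Evu mu0 gscale0.
have cJ := orbit_idem_central_idem vP uU; have [JG _ JJ] := cJ.
have Jnz : J != 0 := orbit_idem_neq0 defG eigPN vP (eigU vP) uU.
apply: (primitive_absorbs primE Jnz cJ).
have EJ_idem : gmul (gscale mu J) (gscale mu J) = gscale mu J.
  by rewrite -EJ gmulA -(gmulA J E J) (Ec J JG) (gmulA E J J) JJ -gmulA EE.
by case: (scalar_idem_01 Jnz JJ EJ_idem) => mu01; [case/eqP: mu_nz | rewrite EJ mu01 gscale1].
Qed.

End Classification.

Theorem mainTheorem8 (gT : finGroupType) (G N H : {group gT})
    (PN : seq (ga gT)) (U : ga gT -> seq (ga gT)) :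
  (N ><| H)%g = G -> abelian N -> abelian H ->
  is_idem_eigenbasis N PN ->
  (forall v, v \in PN -> is_idem_eigenbasis (orbit_stab H v) (U v)) ->
  forall J : ga gT,
    (exists2 v, v \in PN &
       exists2 u, u \in U v & J = \sum_(w <- hconj_orbit H v) gmul w u)
    <-> primitive_central_idem G J.
Proof.
move=> defG abN abH eigPN eigU J; split.
- by case=> v vP [u uU ->]; apply: (orbit_idem_primitive defG abN abH eigPN eigU vP uU).
- exact: (primitive_is_orbit_idem defG abN abH eigPN eigU).
Qed.
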